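(* Let $\Delta \ge 3$ and $q\ge 2$ be integers, let $\alpha = \frac{1}{1000 \log (q\Delta)}$ and $g_\alpha(k) = \sum_{i=0}^{k-1} q^{\alpha i} = \frac{q^{\alpha k}-1}{q^\alpha-1}$. Then $$\beta(\alpha) := \sum_{k=1}^{\Delta} \binom{\Delta}{k} \frac{(2\Delta-1)^{(\Delta-k)(1-\alpha)}}{(2\Delta)^{\Delta(1-\alpha)}}\, g_\alpha(k+1) < 1.$$
   Context: $\log$ denotes the natural logarithm. *)

From Stdlib Require Import Reals.
Open Scope R_scope.

Definition alpha (q D : nat) : R := 1 / (1000 * ln (INR q * INR D)).

Definition g_alpha (q : nat) (a : R) (k : nat) : R :=
  match k with
  | O => 0
  | S m => sum_f_R0 (fun i => Rpower (INR q) (a * INR i)) m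
  end.

Definition beta (q D : nat) (a : R) : R :=
  sum_f 1 D (fun k =>
    C D k * Rpower (2 * INR D - 1) ((INR D - INR k) * (1 - a))
      / Rpower (2 * INR D) (INR D * (1 - a)) * g_alpha q a (k + 1)).

From Stdlib Require Import Reals Lra Lia.
Open Scope R_scope.

(* Write N = 2Δ and a = α. Splitting the powers of 2Δ - 1 and 2Δ, the factor
   (N/(N-1))^(a(Δ-k)) is at most e^a, and g_a(k+1) <= (k+1) q^(ak); so the k-th
   term of β is at most e^a (k+1) C(Δ,k) ((2qΔ)^a/N)^k (1 - 1/N)^(Δ-k).
   Since a <= 1/1000, a log(2qΔ) <= 1/500 and k+1 <= (4/3)(3/2)^k, the
   binomial theorem gives
     β <= (4/3)(1000/999) ((1 + 251/(998Δ))^Δ - (1 - 1/(2Δ))^Δ)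
       <= (4/3)(1000/999) (e^(251/998) - e^(-3/5)) < 1,
   where both exponentials are bounded numerically through (1 + y/n)^n <= e^y
   with n = 64. *)

Lemma exp_le_exp x y : x <= y -> exp x <= exp y.
Proof.
  intros [Hlt | ->]; [now left; apply exp_increasing | apply Rle_refl].
Qed.

Lemma ln_le_sub_one y : 0 < y -> ln y <= y - 1.
Proof.
  intros Hy. destruct (Rle_lt_dec (ln y) (y - 1)) as [Hle | Hlt]; [exact Hle|].
  apply exp_increasing in Hlt. rewrite exp_ln in Hlt by exact Hy.
  pose proof (exp_ineq1_le (y - 1)). lra.
Qed.

Lemma exp_pow_INR (n : nat) y : exp y ^ n = exp (INR n * y).
Proof.
  induction n as [| n IH].
  - now rewrite Rmult_0_l, exp_0.
  - rewrite S_INR, <- tech_pow_Rmult, IH, <- exp_plus. f_equal. ring.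
Qed.

Lemma one_add_div_pow_le_exp (n : nat) y :
  (0 < n)%nat -> - INR n <= y -> (1 + y / INR n) ^ n <= exp y.
Proof.
  intros Hn Hy. assert (HnR : 0 < INR n) by now apply lt_0_INR.
  replace y with (INR n * (y / INR n)) at 2 by (field; lra).
  rewrite <- exp_pow_INR. apply pow_incr. split.
  - apply (Rmult_le_reg_l (INR n)); [exact HnR|].
    replace (INR n * (1 + y / INR n)) with (INR n + y) by (field; lra). lra.
  - apply exp_ineq1_le.
Qed.

Lemma exp_le_inv_one_sub_div_pow (n : nat) y :
  (0 < n)%nat -> y < INR n -> exp y <= / (1 - y / INR n) ^ n.
Proof.
  intros Hn Hy. assert (HnR : 0 < INR n) by now apply lt_0_INR.
  assert (Hpos : 0 < (1 - y / INR n) ^ n).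
  { apply pow_lt. apply (Rmult_lt_reg_l (INR n)); [exact HnR|].
    replace (INR n * (1 - y / INR n)) with (INR n - y) by (field; lra). lra. }
  rewrite <- (Rinv_inv (exp y)), <- exp_Ropp.
  apply Rinv_le_contravar; [exact Hpos|].
  replace (1 - y / INR n) with (1 + - y / INR n) by (field; lra).
  apply one_add_div_pow_le_exp; [exact Hn | lra].
Qed.

Lemma exp_le_inv_one_sub y : y < 1 -> exp y <= / (1 - y).
Proof.
  intros Hy. pose proof (exp_le_inv_one_sub_div_pow 1 y) as H.
  simpl INR in H. rewrite Rdiv_1_r, pow_1 in H. apply H; [lia | lra].
Qed.

Lemma Rpower_pos x y : 0 < Rpower x y.
Proof. apply exp_pos. Qed.

Lemma Rpower_mult_pow x y a (k : nat) : 0 < x -> 0 < y ->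
  Rpower (x * y) a ^ k = Rpower x (a * INR k) * Rpower y (a * INR k).
Proof.
  intros Hx Hy.
  now rewrite <- Rpower_pow, Rpower_mult, Rpower_mult_distr by (apply Rpower_pos || assumption).
Qed.

Lemma Rpower_div_split x N a (D k : nat) : 0 < x -> 0 < N -> (k <= D)%nat ->
  Rpower x ((INR D - INR k) * (1 - a)) / Rpower N (INR D * (1 - a))
  = (x / N) ^ (D - k) / N ^ k * Rpower (N / x) (a * (INR D - INR k))
    * Rpower N (a * INR k).
Proof.
  intros Hx HN HkD.
  assert (HxN : 0 < x / N) by now apply Rdiv_lt_0_compat.
  rewrite <- !Rpower_pow, minus_INR by assumption.
  unfold Rpower, Rdiv. rewrite !ln_mult, !ln_Rinv by auto with real.
  rewrite <- !exp_Ropp, <- !exp_plus. f_equal. ring.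
Qed.

Lemma Rpower_one_add_inv_le_exp x a d : 0 < x -> 0 <= a -> 0 <= d <= x ->
  Rpower (1 + / x) (a * d) <= exp a.
Proof.
  intros Hx Ha Hd. unfold Rpower. apply exp_le_exp.
  assert (Hinv : 0 < / x) by auto with real.
  pose proof (ln_le_sub_one (1 + / x) ltac:(lra)) as Hln.
  assert (d * / x <= 1).
  { apply (Rmult_le_reg_r x); [exact Hx|]. rewrite Rmult_assoc, Rinv_l; lra. }
  apply Rle_trans with (a * d * / x); [| nra].
  apply Rmult_le_compat_l; [nra | lra].
Qed.

Lemma C_nonneg n k : 0 <= C n k.
Proof.
  unfold C. apply Rmult_le_pos; [apply pos_INR|].
  left. apply Rinv_0_lt_compat, Rmult_lt_0_compat; apply INR_fact_lt_0.
Qed.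

Lemma C_n_0 n : C n 0 = 1.
Proof.
  unfold C. rewrite Nat.sub_0_r. simpl. field. apply INR_fact_neq_0.
Qed.

Lemma sum_f_binomial X Y D : (1 <= D)%nat ->
  sum_f 1 D (fun k => C D k * X ^ k * Y ^ (D - k)) = (X + Y) ^ D - Y ^ D.
Proof.
  intros HD. rewrite binomial, decomp_sum by lia.
  rewrite C_n_0, Nat.sub_0_r. unfold sum_f. rewrite Nat.sub_1_r.
  erewrite sum_eq; [| intros i _; now rewrite Nat.add_1_r]. rewrite pow_O. ring.
Qed.

Lemma g_alpha_succ_le q a k : (1 <= q)%nat -> 0 <= a ->
  g_alpha q a (S k) <= (INR k + 1) * Rpower (INR q) (a * INR k).
Proof.
  intros Hq Ha. apply (le_INR 1) in Hq. simpl.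
  apply Rle_trans with (sum_f_R0 (fun _ => Rpower (INR q) (a * INR k)) k).
  - apply sum_Rle. intros i Hi. apply Rle_Rpower; [exact Hq|].
    apply Rmult_le_compat_l; [exact Ha | now apply le_INR].
  - rewrite sum_cte, S_INR. right. ring.
Qed.

Lemma succ_le_pow_3_2 k : (1 <= k)%nat -> INR k + 1 <= 4 / 3 * (3 / 2) ^ k.
Proof.
  intros Hk. induction Hk as [| k Hk IH]; [simpl; lra|].
  rewrite S_INR, <- tech_pow_Rmult. apply (le_INR 1) in Hk. simpl in Hk. lra.
Qed.

Lemma beta_term_le (q D k : nat) a :
  (1 <= q)%nat -> (1 <= D)%nat -> (k <= D)%nat -> 0 <= a ->
  C D k * Rpower (2 * INR D - 1) ((INR D - INR k) * (1 - a))
    / Rpower (2 * INR D) (INR D * (1 - a)) * g_alpha q a (k + 1)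
  <= exp a * (INR k + 1) * C D k
     * (Rpower (2 * INR D * INR q) a / (2 * INR D)) ^ k
     * ((2 * INR D - 1) / (2 * INR D)) ^ (D - k).
Proof.
  intros Hq HD HkD Ha.
  assert (HDR : 1 <= INR D) by (apply (le_INR 1) in HD; exact HD).
  assert (HkR : 0 <= INR D - INR k) by (apply le_INR in HkD; lra).
  assert (HqR : 1 <= INR q) by (apply (le_INR 1) in Hq; exact Hq).
  rewrite <- Rmult_div_assoc, Rpower_div_split by (lra || assumption).
  set (x := 2 * INR D - 1). set (N := 2 * INR D).
  assert (Hx : 0 < x) by (unfold x; lra).
  assert (HN : 0 < N) by (unfold N; lra).
  replace (N / x) with (1 + / x) by (unfold N, x; field; lra).
  rewrite Nat.add_1_r.
  pose proof (Rpower_mult_pow N (INR q) a k HN ltac:(lra)) as Hk.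
  replace (exp a * (INR k + 1) * C D k * (Rpower (N * INR q) a / N) ^ k * (x / N) ^ (D - k))
    with (C D k * ((x / N) ^ (D - k) / N ^ k * exp a * Rpower N (a * INR k))
          * ((INR k + 1) * Rpower (INR q) (a * INR k)))
    by (unfold Rdiv; rewrite !Rpow_mult_distr, Hk, !pow_inv; ring).
  assert (HxN : 0 < x / N) by now apply Rdiv_lt_0_compat.
  assert (HA : 0 <= (x / N) ^ (D - k) / N ^ k).
  { left. apply Rdiv_lt_0_compat; apply pow_lt; assumption. }
  pose proof (C_nonneg D k).
  pose proof (Rpower_pos N (a * INR k)).
  apply Rle_trans with (C D k * ((x / N) ^ (D - k) / N ^ k
      * Rpower (1 + / x) (a * (INR D - INR k)) * Rpower N (a * INR k))
      * ((INR k + 1) * Rpower (INR q) (a * INR k))).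
  - apply Rmult_le_compat_l; [| now apply g_alpha_succ_le].
    pose proof (Rpower_pos (1 + / x) (a * (INR D - INR k))).
    apply Rmult_le_pos; [assumption|]. apply Rmult_le_pos; [apply Rmult_le_pos |]; lra.
  - apply Rmult_le_compat_r.
    { pose proof (Rpower_pos (INR q) (a * INR k)). pose proof (pos_INR k). nra. }
    apply Rmult_le_compat_l; [assumption|]. apply Rmult_le_compat_r; [lra|].
    apply Rmult_le_compat_l; [assumption|].
    apply Rpower_one_add_inv_le_exp; [assumption | assumption |].
    unfold x. pose proof (pos_INR k). lra.
Qed.

Lemma one_lt_ln_mul q D : (2 <= q)%nat -> (3 <= D)%nat -> 1 < ln (INR q * INR D).
Proof.
  intros Hq HD. apply (le_INR 2) in Hq. apply (le_INR 3) in HD. simpl in Hq, HD.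
  rewrite <- (ln_exp 1). apply ln_increasing; [apply exp_pos|].
  pose proof exp_le_3. nra.
Qed.

Lemma alpha_bounds q D : (2 <= q)%nat -> (3 <= D)%nat -> 0 <= alpha q D <= / 1000.
Proof.
  intros Hq HD. pose proof (one_lt_ln_mul q D Hq HD). unfold alpha.
  split.
  - left. apply Rdiv_lt_0_compat; lra.
  - unfold Rdiv. rewrite Rmult_1_l. apply Rinv_le_contravar; lra.
Qed.

Lemma Rpower_alpha_le q D : (2 <= q)%nat -> (3 <= D)%nat ->
  Rpower (2 * INR D * INR q) (alpha q D) <= exp (/ 500).
Proof.
  intros Hq HD. pose proof (one_lt_ln_mul q D Hq HD) as Hl.
  assert (HqR : 0 < INR q) by (apply lt_0_INR; lia).
  assert (HDR : 0 < INR D) by (apply lt_0_INR; lia).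
  unfold Rpower. apply exp_le_exp.
  replace (2 * INR D * INR q) with (2 * (INR q * INR D)) by ring.
  rewrite ln_mult by nra.
  pose proof (ln_le_sub_one 2 ltac:(lra)).
  unfold alpha. apply (Rmult_le_reg_r (1000 * ln (INR q * INR D))); [lra|].
  field_simplify; lra.
Qed.

Lemma beta_alpha_term_le (q D k : nat) :
  (2 <= q)%nat -> (3 <= D)%nat -> (1 <= k <= D)%nat ->
  C D k * Rpower (2 * INR D - 1) ((INR D - INR k) * (1 - alpha q D))
    / Rpower (2 * INR D) (INR D * (1 - alpha q D)) * g_alpha q (alpha q D) (k + 1)
  <= C D k * (750 / 499 / (2 * INR D)) ^ k * ((2 * INR D - 1) / (2 * INR D)) ^ (D - k)
     * (4 / 3 * (1000 / 999)).
Proof.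
  intros Hq HD Hk. pose proof (alpha_bounds q D Hq HD) as Ha.
  assert (HDR : 3 <= INR D) by (apply (le_INR 3) in HD; simpl in HD; lra).
  assert (HN : 0 < 2 * INR D) by lra.
  eapply Rle_trans; [apply beta_term_le; lia || lra|].
  assert (Hexp : exp (alpha q D) <= 1000 / 999).
  { eapply Rle_trans; [apply exp_le_exp, Ha|].
    eapply Rle_trans; [apply exp_le_inv_one_sub; lra | lra]. }
  assert (HR : Rpower (2 * INR D * INR q) (alpha q D) <= 500 / 499).
  { eapply Rle_trans; [apply Rpower_alpha_le; assumption|].
    eapply Rle_trans; [apply exp_le_inv_one_sub; lra | lra]. }
  assert (Hpow : (Rpower (2 * INR D * INR q) (alpha q D) / (2 * INR D)) ^ k
                 <= (500 / 499 / (2 * INR D)) ^ k).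
  { apply pow_incr. split.
    - left. apply Rdiv_lt_0_compat; [apply Rpower_pos | exact HN].
    - unfold Rdiv. apply Rmult_le_compat_r; [left; now apply Rinv_0_lt_compat | exact HR]. }
  pose proof (succ_le_pow_3_2 k ltac:(lia)) as Hsucc.
  replace (750 / 499 / (2 * INR D)) with (3 / 2 * (500 / 499 / (2 * INR D))) by (field; lra).
  rewrite Rpow_mult_distr.
  pose proof (C_nonneg D k).
  assert (0 <= ((2 * INR D - 1) / (2 * INR D)) ^ (D - k)).
  { apply pow_le. left. apply Rdiv_lt_0_compat; lra. }
  assert (0 <= (Rpower (2 * INR D * INR q) (alpha q D) / (2 * INR D)) ^ k).
  { apply pow_le. left. apply Rdiv_lt_0_compat; [apply Rpower_pos | exact HN]. }
  pose proof (pos_INR k). pose proof (exp_pos (alpha q D)).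
  replace (C D k * ((3 / 2) ^ k * (500 / 499 / (2 * INR D)) ^ k)
           * ((2 * INR D - 1) / (2 * INR D)) ^ (D - k) * (4 / 3 * (1000 / 999)))
    with (1000 / 999 * (4 / 3 * (3 / 2) ^ k) * C D k * (500 / 499 / (2 * INR D)) ^ k
          * ((2 * INR D - 1) / (2 * INR D)) ^ (D - k)) by ring.
  apply Rmult_le_compat_r; [assumption|].
  apply Rmult_le_compat; [| assumption | | exact Hpow].
  - apply Rmult_le_pos; [apply Rmult_le_pos|]; lra.
  - apply Rmult_le_compat_r; [assumption|]. apply Rmult_le_compat; lra.
Qed.

Lemma exp_251_998_le : exp (251 / 998) <= 129 / 100.
Proof.
  eapply Rle_trans; [apply (exp_le_inv_one_sub_div_pow 64); [lia | simpl INR; lra]|].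
  simpl INR. rewrite <- (Rinv_inv (129 / 100)).
  apply Rinv_le_contravar; lra.
Qed.

Lemma exp_neg_3_5_ge : 545 / 1000 <= exp (- (3 / 5)).
Proof.
  eapply Rle_trans; [| apply (one_add_div_pow_le_exp 64); [lia | simpl INR; lra]].
  simpl INR. lra.
Qed.

Lemma exp_neg_3_5_le_pow D : (3 <= D)%nat ->
  exp (- (3 / 5)) <= ((2 * INR D - 1) / (2 * INR D)) ^ D.
Proof.
  intros HD. apply (le_INR 3) in HD. simpl in HD.
  set (s := / (2 * INR D - 1)).
  assert (Hs : 0 < s) by (apply Rinv_0_lt_compat; lra).
  assert (HY : exp (- s) <= (2 * INR D - 1) / (2 * INR D)).
  { replace ((2 * INR D - 1) / (2 * INR D)) with (/ (1 + s)) by (unfold s; field; lra).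
    rewrite exp_Ropp. apply Rinv_le_contravar; [lra | apply exp_ineq1_le]. }
  eapply Rle_trans; [| apply pow_incr; split; [left; apply exp_pos | exact HY]].
  rewrite exp_pow_INR. apply exp_le_exp.
  unfold s. apply (Rmult_le_reg_r (2 * INR D - 1)); [lra|]. field_simplify; lra.
Qed.

Theorem proposition4p15 (D q : nat) (hD : (3 <= D)%nat) (hq : (2 <= q)%nat) :
  beta q D (alpha q D) < 1.
Proof.
  assert (HDR : 3 <= INR D) by (apply (le_INR 3) in hD; simpl in hD; lra).
  set (X := 750 / 499 / (2 * INR D)).
  set (Y := (2 * INR D - 1) / (2 * INR D)).
  apply Rle_lt_trans
    with (4 / 3 * (1000 / 999) * sum_f 1 D (fun k => C D k * X ^ k * Y ^ (D - k))).
  { unfold beta, sum_f. rewrite scal_sum. apply sum_Rle. intros i Hi.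
    apply beta_alpha_term_le; lia. }
  rewrite sum_f_binomial by lia.
  assert (HXY : (X + Y) ^ D <= 129 / 100).
  { replace (X + Y) with (1 + 251 / 998 / INR D) by (unfold X, Y; field; lra).
    eapply Rle_trans; [apply one_add_div_pow_le_exp; lia || lra | apply exp_251_998_le]. }
  pose proof (exp_neg_3_5_le_pow D hD) as HY. fold Y in HY.
  pose proof exp_neg_3_5_ge. lra.
Qed.
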